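(* For $a\in\mathbb{R}$, let the polynomials $H_m(z,a)$ in $z$ be defined by $\sum_{m\ge0}H_m(z,a)t^m=\frac{1}{1+t+at^2+zt^3}$, and let $I_a=\left(-\infty,\frac{-2+9a-2\sqrt{(1-3a)^3}}{27}\right]$. Let $S$ be a dense subset of $[-1,1/3]$ and fix $m\in\mathbb{N}$. If $\mathcal{Z}(H_m(z,a))\subseteq I_a$ for all $a\in S$, then $\mathcal{Z}(H_m(z,a^* ))\subseteq I_{a^*}$ for all $a^*\in[-1,1/3]$.
   Context: $\mathcal{Z}(H_m(z,a))$ denotes the set of zeros in $z$ of the polynomial $H_m(z,a)$. *)

From HB Require Import structures.
From mathcomp Require Import all_boot all_order all_algebra.
From mathcomp Require Import reals.
From mathcomp Require Import complex.
Set Implicit Arguments. Unset Strict Implicit. Unset Printing Implicit Defensive.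
Import Order.TTheory GRing.Theory Num.Theory.
Local Open Scope ring_scope.

(* Htrip a m = (H_m, H_{m-1}, H_{m-2}) as polynomials in z (H_{-1}=H_{-2}=0),
   from the recurrence H_m + H_{m-1} + a H_{m-2} + z H_{m-3} = [m == 0],
   equivalent to sum_m H_m(z,a) t^m = 1/(1+t+a t^2+z t^3). *)
Fixpoint Htrip (R : realType) (a : R) (m : nat) : {poly R} * {poly R} * {poly R} :=
  match m with
  | 0 => (1, 0, 0)
  | m'.+1 => let: (h0, h1, h2) := Htrip a m' in
             (- h0 - a%:P * h1 - 'X * h2, h0, h1)
  end.

Definition H (R : realType) (m : nat) (a : R) : {poly R} := (Htrip a m).1.1.

Definition Iend (R : realType) (a : R) : R :=
  (-2 + 9 * a - 2 * Num.sqrt ((1 - 3 * a) ^+ 3)) / 27.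

Definition zeros_in_I (R : realType) (m : nat) (a : R) : Prop :=
  forall x : R[i], root (map_poly (fun c : R => (c%:C)%C) (H m a)) x ->
    complex.Im x = 0 /\ complex.Re x <= Iend a.

From HB Require Import structures.
From mathcomp Require Import all_boot all_order all_algebra.
From mathcomp Require Import reals complex.
From mathcomp Require Import boolp topology normedtype derive realfun.
From mathcomp Require Import ring lra zify.
Import Order.TTheory GRing.Theory Num.Theory numFieldNormedType.Exports.
Local Open Scope ring_scope.

(* Let x be a zero of H_m(., a0) and g(a) := max(|Im x|, Re x - max I_a); g is
   nonnegative, bounds the distance from x to I_a from below, and vanishes iff
   x lies in I_a.  For a <= 1/3, H_m(., a) has degree m/3 and a leading
   coefficient of modulus at least 2/3, so if all its zeros lie in I_a then
   |H_m(x, a)| >= 2/3 g(a)^(m/3).  Both sides are continuous in a (the real and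
   imaginary parts of H_m(x, a) are polynomials in a), and letting a tend to a0
   inside S gives 0 = |H_m(x, a0)| >= 2/3 g(a0)^(m/3), so g(a0) = 0. *)

Lemma norm_horner_ge_root_dist {C : numClosedFieldType} (P : {poly C}) (x d : C) :
  0 <= d -> (forall r, root P r -> d <= `|x - r|) ->
  `|lead_coef P| * d ^+ (size P).-1 <= `|P.[x]|.
Proof.
move=> d_ge0 dist_roots.
have [rs P_eq] := closed_field_poly_normal P.
have [->|P_neq0] := eqVneq P 0; first by rewrite lead_coef0 normr0 mul0r.
have lc_neq0 : lead_coef P != 0 by rewrite lead_coef_eq0.
have -> : (size P).-1 = size rs by rewrite P_eq size_scale // size_prod_XsubC.
have -> : d ^+ size rs = \prod_(r <- rs) d.
  by rewrite big_const_seq count_predT; elim: (size rs) => [|n IH] //=; rewrite exprS IH.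
rewrite [in `|P.[x]|]P_eq hornerZ horner_prod normrM normr_prod ler_wpM2l //.
rewrite !big_seq; apply: ler_prod => r r_in; rewrite d_ge0 hornerXsubC /= dist_roots //.
by rewrite P_eq rootZ // root_prod_XsubC.
Qed.

Lemma dense_exists_gt0 {R : realType} (S : R -> Prop) (a0 : R) (G : R -> R) :
  (forall e : R, 0 < e -> exists s, S s /\ `|s - a0| < e) ->
  {for a0, continuous G} -> 0 < G a0 -> exists s, S s /\ 0 < G s.
Proof.
move=> S_dense G_cont G_gt0.
have /nbhs_ballP[e e_gt0 G_near] := cvgr_gt (FF := nbhs_filter a0) _ G_cont _ G_gt0.
have [s [Ss s_near]] := S_dense e e_gt0.
by exists s; split => //; apply: G_near; rewrite /ball /= distrC.
Qed.

Lemma continuous_sqrt_horner {R : realType} (p : {poly R}) :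
  continuous (fun a => Num.sqrt p.[a]).
Proof.
by move=> a; apply: continuous_comp; [exact: continuous_horner | exact: sqrt_continuous].
Qed.

Section RecurrenceStep.
Context {R : comNzRingType}.
Implicit Types (c : R) (p q r : {poly R}).

Lemma coef_rec_step c p q r i :
  (- p - c%:P * q - 'X * r)`_i.+1 = - p`_i.+1 - c * q`_i.+1 - r`_i.
Proof. by rewrite !coefB coefN coefCM coefXM. Qed.

Lemma size_rec_step c p q r n : (size p <= n.+1)%N -> (size q <= n.+1)%N ->
  (size r <= n)%N -> (size (- p - c%:P * q - 'X * r)%R <= n.+1)%N.
Proof.
move=> sp sq sr; apply/leq_sizeP => -[|j] // lt_nj.
rewrite coef_rec_step !nth_default; first by ring.
- exact: leq_trans sr _.
- exact: leq_trans sq lt_nj.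
- exact: leq_trans sp lt_nj.
Qed.

End RecurrenceStep.

Section HPolynomials.
Context {R : realType}.
Implicit Types (a : R) (x : R[i]).

Lemma H_rec a n : H n.+3 a = - H n.+2 a - a%:P * H n.+1 a - 'X * H n a.
Proof. by rewrite /H /=; case: (Htrip a n) => [[h0 h1] h2]. Qed.

Lemma H0 a : H 0 a = 1. Proof. by []. Qed.
Lemma H1 a : H 1 a = -1. Proof. by rewrite /H /= !mulr0 !subr0. Qed.
Lemma H2 a : H 2 a = 1 - a%:P. Proof. by rewrite /H /=; ring. Qed.

Lemma H_top_coef a k :
  [/\ size (H (3 * k) a) <= k.+1, size (H (3 * k).+1 a) <= k.+1
    & size (H (3 * k).+2 a) <= k.+1]%N /\
  [/\ (H (3 * k) a)`_k = (-1) ^+ k, (H (3 * k).+1 a)`_k = (-1) ^+ k.+1 * k.+1%:R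
    & (H (3 * k).+2 a)`_k = (-1) ^+ k * (k.+1%:R * (k.+2%:R / 2 - a))].
Proof.
elim: k => [|k [[s0 s1 s2] [e0 e1 e2]]].
  rewrite H0 H1 H2 -polyCB -polyCN size_poly1 !size_polyC !coefC /=.
  by split; split; rewrite ?leq_b1 //; field.
have -> : (3 * k.+1 = (3 * k).+3)%N by lia.
have E3 := H_rec a (3 * k); have E4 := H_rec a (3 * k).+1.
have E5 := H_rec a (3 * k).+2.
have s3 : (size (H (3 * k).+3 a) <= k.+2)%N by rewrite E3 size_rec_step // ltnW.
have s4 : (size (H (3 * k).+4 a) <= k.+2)%N by rewrite E4 size_rec_step // ltnW.
have s5 : (size (H (3 * k).+2.+3 a) <= k.+2)%N by rewrite E5 size_rec_step // ltnW.
have c3 : (H (3 * k).+3 a)`_k.+1 = (-1) ^+ k.+1.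
  by rewrite E3 coef_rec_step !(nth_default _ s1, nth_default _ s2) e0 exprS; ring.
have c4 : (H (3 * k).+4 a)`_k.+1 = (-1) ^+ k.+2 * k.+2%:R.
  by rewrite E4 coef_rec_step c3 (nth_default _ s2) e1 !exprS -!natr1; ring.
have c5 : (H (3 * k).+2.+3 a)`_k.+1 = (-1) ^+ k.+1 * (k.+2%:R * (k.+3%:R / 2 - a)).
  by rewrite E5 coef_rec_step c4 c3 e2 !exprS -!natr1; field.
by split; split.
Qed.

Lemma H_size_lead a m : a <= 1 / 3 ->
  size (H m a) = (m %/ 3).+1 /\ 2 / 3 <= `|lead_coef (H m a)|.
Proof.
move=> a_le; set k := (m %/ 3)%N.
have [c [size_le coef_k c_ge]] :
    exists c, [/\ (size (H m a) <= k.+1)%N, (H m a)`_k = c & 2 / 3 <= `|c|].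
  have [[s0 s1 s2] [e0 e1 e2]] := H_top_coef a k.
  have k1_ge1 : 1 <= k.+1%:R :> R by rewrite ler1n.
  have := divn_eq m 3; have := ltn_pmod m (isT : (0 < 3)%N).
  rewrite -/k mulnC; case: (m %% 3)%N => [|[|[|//]]] _ ->;
    rewrite ?addn0 ?addn1 ?addn2.
  - by exists ((-1) ^+ k); rewrite normrX normrN1 expr1n; split => //; lra.
  - by exists ((-1) ^+ k.+1 * k.+1%:R); rewrite normrMsign normr_nat; split => //; lra.
  - exists ((-1) ^+ k * (k.+1%:R * (k.+2%:R / 2 - a))); split => //.
    have k2_ge2 : 2 <= k.+2%:R :> R by rewrite (ler_nat _ 2).
    have f_ge : 2 / 3 <= k.+1%:R * (k.+2%:R / 2 - a) by nra.
    by rewrite normrMsign ger0_norm //; lra.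
have c_neq0 : c != 0 by apply: contraTneq c_ge => ->; rewrite normr0; lra.
have size_eq : size (H m a) = k.+1.
  apply/eqP; rewrite eqn_leq size_le /=; apply: contraTT c_neq0; rewrite -ltnNge ltnS.
  by move=> /(nth_default 0); rewrite coef_k => ->; rewrite eqxx.
by rewrite lead_coefE size_eq coef_k.
Qed.

Definition Heval x m a : R[i] := (map_poly (fun c : R => c%:C%C) (H m a)).[x].

Lemma Heval_rec x a n :
  Heval x n.+3 a = - Heval x n.+2 a - a%:C%C * Heval x n.+1 a - x * Heval x n a.
Proof.
by rewrite /Heval H_rec !rmorphB rmorphN !rmorphM /= map_polyC map_polyX !hornerE.
Qed.

Lemma Heval_poly_in_a x n :
  exists pr pi : {poly R}, forall a, Heval x n a = (pr.[a] +i* pi.[a])%C.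
Proof.
pose P k := exists pr pi : {poly R}, forall a, Heval x k a = (pr.[a] +i* pi.[a])%C.
suff : P n /\ P n.+1 /\ P n.+2 by case.
elim: n => [|n [[pr0 [pi0 E0]] [[pr1 [pi1 E1]] [pr2 [pi2 E2]]]]].
  split; [exists 1, 0 | split; [exists (-1), 0 | exists (1 - 'X), 0]] => a.
  - by rewrite /Heval H0 rmorph1 !hornerE complexr0 rmorph1.
  - by rewrite /Heval H1 rmorphN rmorph1 !hornerE complexr0 rmorphN rmorph1.
  - by rewrite /Heval H2 rmorphB rmorph1 /= map_polyC !hornerE complexr0 rmorphB rmorph1.
split; first by exists pr1, pi1.
split; first by exists pr2, pi2.
exists (- pr2 - 'X * pr1 - ((complex.Re x)%:P * pr0 - (complex.Im x)%:P * pi0)).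
exists (- pi2 - 'X * pi1 - ((complex.Re x)%:P * pi0 + (complex.Im x)%:P * pr0)) => a.
rewrite Heval_rec E0 E1 E2 !hornerE; clear P E0 E1 E2; case: x => x1 x2.
by rewrite -complexr0; simpc; congr (_ +i* _)%C; ring.
Qed.

Lemma norm_Heval_sqrt_poly x n :
  exists Q : {poly R}, forall a, `|Heval x n a| = (Num.sqrt Q.[a])%:C%C.
Proof.
have [pr [pi E]] := Heval_poly_in_a x n.
by exists (pr ^+ 2 + pi ^+ 2) => a; rewrite E normc_def /= !hornerE.
Qed.

Definition gapI x a : R := Num.max `|complex.Im x| (complex.Re x - Iend a).

Lemma gapI_ge0 x a : 0 <= gapI x a.
Proof. by rewrite le_max normr_ge0. Qed.

Lemma gapI_le0 x a : gapI x a <= 0 -> complex.Im x = 0 /\ complex.Re x <= Iend a.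
Proof. by rewrite ge_max normr_le0 subr_le0 => /andP[/eqP]. Qed.

Lemma gapI_le_dist x a r : complex.Im r = 0 -> complex.Re r <= Iend a ->
  (gapI x a)%:C%C <= `|x - r|.
Proof.
case: x r => u v [s t] /= -> s_le; rewrite normc_def lecR /= subr0.
set T := _ + _; have T_ge0 : 0 <= T by rewrite addr_ge0 ?sqr_ge0.
have norm_le w : w ^+ 2 <= T -> `|w| <= Num.sqrt T.
  by move=> w2_le; rewrite -sqrtr_sqr ler_sqrt.
rewrite ge_max norm_le ?lerDr ?sqr_ge0 //=.
apply: le_trans (_ : u - s <= _); first by rewrite lerB.
by apply: le_trans (ler_norm _) (norm_le _ _); rewrite lerDl sqr_ge0.
Qed.

Lemma continuous_Iend : continuous (@Iend R).
Proof.
have -> : @Iend R =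
    fun a => (((-2)%:P + 9%:P * 'X).[a] - 2 * Num.sqrt ((1 - 3%:P * 'X) ^+ 3).[a]) / 27.
  by apply/funext => a; rewrite /Iend !hornerE.
move=> a; apply: cvgM; last exact: cvg_cst.
apply: cvgB; first exact: continuous_horner.
by apply: cvgM; [exact: cvg_cst | exact: continuous_sqrt_horner].
Qed.

Lemma continuous_gapI x : continuous (gapI x).
Proof.
move=> a; apply: (continuous_max (f := fun=> `|complex.Im x|)
  (g := fun a => complex.Re x - Iend a)); first exact: cvg_cst.
by apply: cvgB; [exact: cvg_cst | exact: continuous_Iend].
Qed.

Lemma norm_Heval_ge x m a : a <= 1 / 3 -> zeros_in_I m a ->
  (2 / 3 * gapI x a ^+ (m %/ 3))%:C%C <= `|Heval x m a|.
Proof.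
move=> a_le zeros; have [size_eq lead_ge] := H_size_lead a m a_le.
have gap_ge0 : 0 <= (gapI x a)%:C%C :> R[i] by rewrite ler0c gapI_ge0.
have roots_far r : root (map_poly (fun c : R => c%:C%C) (H m a)) r ->
    (gapI x a)%:C%C <= `|x - r|.
  by move=> /zeros[Im0 Re_le]; exact: gapI_le_dist.
apply: le_trans (norm_horner_ge_root_dist _ _ _ gap_ge0 roots_far).
rewrite lead_coef_map size_map_poly size_eq /= normc_def /= expr0n addr0 sqrtr_sqr.
by rewrite -rmorphXn -rmorphM lecR ler_wpM2r // exprn_ge0 // gapI_ge0.
Qed.

End HPolynomials.

Theorem lemma2p2 (R : realType) (S : R -> Prop) (m : nat)
  (HSsub : forall s, S s -> -1 <= s <= 1 / 3)
  (HSdense : forall x, -1 <= x <= 1 / 3 ->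
     forall e : R, 0 < e -> exists s, S s /\ `|s - x| < e)
  (Hzeros : forall a, S a -> zeros_in_I m a) :
  forall astar : R, -1 <= astar <= 1 / 3 -> zeros_in_I m astar.
Proof.
move=> a0 a0_in x x_root; apply: gapI_le0; rewrite leNgt; apply/negP => gap_gt0.
have [Q normQ] := norm_Heval_sqrt_poly x m.
pose G a := 2 / 3 * gapI x a ^+ (m %/ 3) - Num.sqrt Q.[a].
have G_cont : {for a0, continuous G}.
  apply: cvgB; last exact: continuous_sqrt_horner.
  apply: cvgM; first exact: cvg_cst.
  apply: (continuous_comp (f := gapI x) (g := fun y => y ^+ (m %/ 3))).
    exact: continuous_gapI.
  exact: exprn_continuous.
have G_gt0 : 0 < G a0.
  have : (Num.sqrt Q.[a0])%:C%C = 0 by rewrite -normQ /Heval (eqP x_root) normr0.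
  by case=> sqrtQ0; rewrite /G sqrtQ0 subr0 mulr_gt0 ?exprn_gt0 ?divr_gt0.
have [s [Ss Gs_gt0]] := dense_exists_gt0 S a0 G (HSdense a0 a0_in) G_cont G_gt0.
have /andP[_ s_le] := HSsub s Ss.
have := norm_Heval_ge x m s s_le (Hzeros s Ss); rewrite normQ lecR.
by rewrite leNgt -subr_gt0 Gs_gt0.
Qed.
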